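(* Let $n\ge 2$, $R=\mathbb{Q}[q^{\pm1},t^{\pm1}]$, and let $\widehat{C}^*=\widehat{C}^*(\widetilde{B}_n)$ be the augmented Salvetti complex with coefficients in $R_{q,t}$, and $\widehat{I}\subset\widehat{C}^*$ the subcomplex of $\sigma$-invariant elements. Let $C^*(B_n)$ be the Salvetti complex of the Artin group of type $B_n$ with coefficients in $R$, where $B_n$ has vertices $1,\dots,n$ (path $1-2-\dots-n$, edge $\{n-1,n\}$ labelled $4$, others $3$), vertices $1,\dots,n-1$ act by $-q$ and vertex $n$ by $-t$. Define $\beta:C^*(B_n)\to\widehat{C}^*$ on basis elements by: for $\Gamma\subset\{1,\dots,n\}$ let $\Gamma^+=\{j+1: j\in\Gamma, j\ge2\}\subset\{3,\dots,n+1\}$; if $1\notin\Gamma$ then $\beta(e_\Gamma)=e_{\Gamma^+}$, and if $1\in\Gamma$ then $\beta(e_\Gamma)=e_{\Gamma^+\cup\{1\}}+e_{\Gamma^+\cup\{2\}}$. Then $\beta$ is an isomorphism of cochain complexes from $C^*(B_n)$ onto $\widehat{I}$.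
   Context: Salvetti complex: for a Coxeter system $(W,S)$ with $S$ linearly ordered, an abelian representation $\eta$ of the Artin group into units of a ring $R$, and an $R$-module $M$, the cochain complex $C^*(W;M)$ has $C^k=\bigoplus_{\Gamma\subset S,\ |\Gamma|=k,\ |W_\Gamma|<\infty} M\,e_\Gamma$ and differential $d(e_\Gamma)=\sum (-1)^{\alpha(\Gamma,\Gamma')}\frac{W_{\Gamma'}(\eta)}{W_\Gamma(\eta)}e_{\Gamma'}$, the sum over $\Gamma'=\Gamma\cup\{s'\}\supsetneq\Gamma$ with $W_{\Gamma'}$ finite, $\alpha(\Gamma,\Gamma')=|\{s\in\Gamma: s<s'\}|$, and $W_\Gamma(\eta)=\sum_{w\in W_\Gamma}(-1)^{\ell(w)}\eta(\psi(w))$ ($\psi$ the canonical section $W\to$ Artin group). When generator $s$ acts by $-q$ (resp. $-t$), $W_\Gamma(\eta)=\sum_{w\in W_\Gamma}q^{a(w)}t^{b(w)}$ with $a(w)$, $b(w)$ the numbers of $q$-type and $t$-type letters in a reduced word. Type $\widetilde{B}_n$: vertices $S=\{1,\dots,n+1\}$, $1$ and $2$ joined to $3$, $i$ joined to $i+1$ for $3\le i\le n$, all labels $3$ except $\{n,n+1\}$ with label $4$; $R_{q,t}$ is $R$ with generators $1,\dots,n$ acting by $-q$ and $n+1$ by $-t$. Proper subsets of $S$ are exactly those with finite parabolic subgroup. The augmented complex is $\widehat{C}^*=C^*(\widetilde{B}_n;R_{q,t})\oplus R\,e_S$, with $d(e_\Gamma)$ for $|\Gamma|=n$ additionally containing the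 term $(-1)^{\alpha(\Gamma,S)}\frac{\widehat{W}(q,t)}{W_\Gamma(q,t)}e_S$, where $\widehat{W}(q,t)=[2(n-1)]_q!!\,[n]_q\prod_{i=0}^{n-1}(1+tq^i)$, $[m]_q=1+\dots+q^{m-1}$, $[2k]_q!!=\prod_{i=1}^k[2i]_q$. The involution $\sigma$ of $\widehat{C}^*$ is: $\sigma(e_\Gamma)=e_\Gamma$ if $1,2\notin\Gamma$; $\sigma(e_\Gamma)=-e_\Gamma$ if $1,2\in\Gamma$ (including $\Gamma=S$); and if $\Gamma$ contains exactly one of $1,2$, $\sigma(e_\Gamma)=e_{\Gamma'}$ where $\Gamma'$ is obtained by exchanging $1$ and $2$. *)

From HB Require Import structures.
From mathcomp Require Import all_boot all_order all_algebra.
From mathcomp Require Import fraction.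
Set Implicit Arguments. Unset Strict Implicit. Unset Printing Implicit Defensive.
Import Order.TTheory GRing.Theory Num.Theory.
Local Open Scope ring_scope.

(* The coefficient ring R = Q[q^{+-1}, t^{+-1}], realised inside the   *)
(* field K = Frac(Q[t][q]) as the elements x such that                 *)
(* x * q^a * t^b is a polynomial for some a, b.                        *)
Definition Pol := {poly {poly rat}}.
Definition K := {fraction Pol}.
Definition toK (p : Pol) : K := FracField.tofrac p.
Definition qK : K := toK ('X : Pol).
Definition tK : K := toK ((('X : {poly rat})%:P) : Pol).

Definition isLaurent (x : K) : Prop :=
  exists (a b : nat) (p : Pol), x * qK ^+ a * tK ^+ b = toK p.

(* Generic cochain machinery on a finite linearly ordered vertex set   *)
(* 'I_m (vertex number = ordinal + 1; order = natural order).          *)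
(* A cochain is a function {set 'I_m} -> K (coefficient of e_Gamma).   *)
Definition cochain (m : nat) := {set 'I_m} -> K.

Definition laurentC m (x : cochain m) : Prop := forall G, isLaurent (x G).

Definition ebasis m (G : {set 'I_m}) : cochain m := fun D => (D == G)%:R.

Definition alpha m (G : {set 'I_m}) (s : 'I_m) : nat := #|[set x in G | (x < s)%N]|.

Definition dbasis m (W : {set 'I_m} -> K) (G : {set 'I_m}) : cochain m :=
  fun D => \sum_(s : 'I_m | s \notin G)
             (D == s |: G)%:R * ((-1) ^+ alpha G s * (W (s |: G) / W G)).

Definition linext m m' (f : {set 'I_m} -> cochain m') (x : cochain m) : cochain m' :=
  fun D => \sum_(G : {set 'I_m}) x G * f G D.

Definition dcoch m (W : {set 'I_m} -> K) : cochain m -> cochain m :=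
  linext (dbasis W).

(* Poincare polynomials W_Gamma(q,t) of the finite parabolic subgroups *)
Definition qint (k : nat) : K := \sum_(i < k) qK ^+ i.
(* type A_k, all generators q :  [k+1]_q! *)
Definition PA (k : nat) : K := \prod_(1 <= i < k.+2) qint i.
(* type B_k, the end node beyond the 4-edge acts by t, the others by q *)
Definition PB (k : nat) : K := \prod_(i < k) (qint i.+1 * (1 + tK * qK ^+ i)).
(* type D_k, all generators q : [k]_q [2(k-1)]_q!! *)
Definition PD (k : nat) : K := qint k * \prod_(1 <= i < k) qint (2 * i).

Fixpoint runlen (P : pred nat) (fuel v : nat) : nat :=
  if fuel is f.+1 then (if P v then (runlen P f v.+1).+1 else 0%N) else 0%N.

Definition vB n (i : 'I_n) : nat := i.+1.
Definition memB n (G : {set 'I_n}) (v : nat) : bool := [exists i in G, vB i == v].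

(* product over maximal runs of consecutive vertices of Gamma; a run of
   length k is of type B_k if it contains vertex n, otherwise A_k *)
Definition WB n (G : {set 'I_n}) : K :=
  \prod_(1 <= v < n.+1 | memB G v && ((v == 1)%N || ~~ memB G v.-1))
     (let k := runlen (memB G) n v in
      if (v + k == n.+1)%N then PB k else PA k).

Definition vT n (j : 'I_n.+1) : nat := j.+1.
Definition memT n (G : {set 'I_n.+1}) (v : nat) : bool := [exists j in G, vT j == v].

(* W_Gamma for a proper subset Gamma of S: vertices 1,2 are attached to 3,
   3..n+1 form a path ending with the 4-edge {n,n+1}; n+1 acts by t. *)
Definition WTproper n (G : {set 'I_n.+1}) : K :=
  let a := (memT G 1 + memT G 2)%N in
  let first :=
    if memT G 3 then
      let k := runlen (memT G) n.+1 3 in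
      if (3 + k == n.+2)%N then PB (k + a)
      else if a == 0%N then PA k
      else if a == 1%N then PA k.+1
      else PD k.+2
    else (1 + qK) ^+ a in
  first *
  \prod_(4 <= v < n.+2 | memT G v && ~~ memT G v.-1)
     (let k := runlen (memT G) n.+1 v in
      if (v + k == n.+2)%N then PB k else PA k).

Definition What n : K :=
  (\prod_(1 <= i < n) qint (2 * i)) * qint n * \prod_(i < n) (1 + tK * qK ^+ i).

Definition WT n (G : {set 'I_n.+1}) : K :=
  if G == setT then What n else WTproper G.

Definition dB n : cochain n -> cochain n := dcoch (@WB n).
Definition dT n : cochain n.+1 -> cochain n.+1 := dcoch (@WT n).

Definition swap12 (v : nat) : nat :=
  if (v == 1)%N then 2%N else if (v == 2)%N then 1%N else v.
Definition swapset n (G : {set 'I_n.+1}) : {set 'I_n.+1} :=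
  [set j : 'I_n.+1 | memT G (swap12 (vT j))].

Definition sigma_basis n (G : {set 'I_n.+1}) : cochain n.+1 :=
  if ~~ memT G 1 && ~~ memT G 2 then ebasis G
  else if memT G 1 && memT G 2 then (fun D => - ebasis G D)
  else ebasis (swapset G).

Definition sigma n : cochain n.+1 -> cochain n.+1 := linext (@sigma_basis n).

Definition plusset n (G : {set 'I_n}) : {set 'I_n.+1} :=
  [set j : 'I_n.+1 | [exists i in G, (2 <= vB i)%N && (vT j == (vB i).+1)]].
Definition vset n (v : nat) : {set 'I_n.+1} := [set j : 'I_n.+1 | vT j == v].

Definition beta_basis n (G : {set 'I_n}) : cochain n.+1 :=
  if memB G 1 then
    (fun D => ebasis (plusset G :|: vset n 1) D + ebasis (plusset G :|: vset n 2) D)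
  else ebasis (plusset G).

Definition beta n : cochain n -> cochain n.+1 := linext (@beta_basis n).

From HB Require Import structures.
From mathcomp Require Import all_boot all_order all_algebra.
From mathcomp Require Import fraction zify ring.
Import Order.TTheory GRing.Theory Num.Theory.
Local Open Scope ring_scope.
Set Implicit Arguments. Unset Strict Implicit. Unset Printing Implicit Defensive.

(* Merging the vertices 1 and 2 of tilde-B_n into the vertex 1 of B_n (and sending j+1 to j for
   j >= 3) maps each subset A containing at most one of 1, 2 onto a subset H of B_n; since 1 and 2
   play the same role in tilde-B_n, the parabolic subgroups of A and H have the same Coxeter type
   and A, H sit in the same place in the linear order, so the weights W and signs alpha agree.
   Thus beta e_H is the sum of the sets lying over H, and d beta and beta d agree term by term,
   except that for 1 in H, d beta e_H has two extra faces H^+ u {1,2} which cancel.  The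
   involution sigma negates the sets containing 1 and 2 and swaps the two sets lying over the
   same H, so a sigma-invariant cochain vanishes on the former, is constant on the latter, and
   is the image under beta of its values on the sets lying over each H. *)

Section LinearExtension.

Lemma sum_delta_mull (R : pzRingType) (T : finType) (X : T) (y : T -> R) :
  \sum_(G : T) (G == X)%:R * y G = y X.
Proof.
rewrite (bigD1 X) //= eqxx mul1r big1 ?addr0 // => G /negbTE ->; exact: mul0r.
Qed.

Lemma sum_delta_mulr (R : pzRingType) (T : finType) (X : T) (y : T -> R) :
  \sum_(G : T) y G * (G == X)%:R = y X.
Proof.
by rewrite -[RHS](sum_delta_mull X); apply: eq_bigr => G _; rewrite mulr_natr mulr_natl.
Qed.

Variables m m' m'' : nat.

Lemma linext_linext (f : {set 'I_m'} -> cochain m'') (g : {set 'I_m} -> cochain m')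
    (x : cochain m) D :
  linext f (linext g x) D = \sum_H x H * linext f (g H) D.
Proof.
rewrite /linext; under eq_bigr => G _ do rewrite big_distrl /=.
rewrite exchange_big /=; apply: eq_bigr => H _.
by rewrite big_distrr /=; apply: eq_bigr => G _; rewrite mulrA.
Qed.

Lemma linext_dbasis (f : {set 'I_m} -> cochain m') W G D :
  linext f (dbasis W G) D =
  \sum_(s : 'I_m | s \notin G) ((-1) ^+ alpha G s * (W (s |: G) / W G)) * f (s |: G) D.
Proof.
rewrite /linext /dbasis; under eq_bigr => G' _ do rewrite big_distrl /=.
rewrite exchange_big /=; apply: eq_bigr => s _.
rewrite -(sum_delta_mull (s |: G) (fun G' => _ * f G' D)).
by apply: eq_bigr => G' _; rewrite !mulrA.
Qed.

Lemma linext_ebasis (f : {set 'I_m} -> cochain m') A D : linext f (ebasis A) D = f A D.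
Proof. exact: sum_delta_mull. Qed.

Lemma linext_ebasisD (f : {set 'I_m} -> cochain m') A B D :
  linext f (fun G => ebasis A G + ebasis B G) D = f A D + f B D.
Proof.
rewrite /linext; under eq_bigr => G _ do rewrite mulrDl.
by rewrite big_split /= -!/(linext _ _ _) !linext_ebasis.
Qed.

End LinearExtension.

Lemma memTE n (A : {set 'I_n.+1}) (j : 'I_n.+1) : memT A (vT j) = (j \in A).
Proof.
apply/existsP/idP => [[j' /andP[hj /eqP [e]]]|hj]; last by exists j; rewrite hj eqxx.
by rewrite -(val_inj e).
Qed.

Lemma memBE n (A : {set 'I_n}) (i : 'I_n) : memB A (vB i) = (i \in A).
Proof.
apply/existsP/idP => [[i' /andP[hi /eqP [e]]]|hi]; last by exists i; rewrite hi eqxx.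
by rewrite -(val_inj e).
Qed.

Section Merging.

Variable m : nat.

(* Ordinal [i] stands for the vertex [i+1]; [shift1] sends the vertex [i+1] of B_n to the vertex
   [i+2] of tilde-B_n, so [ord0] and [shift1 ord0] are the vertices 1 and 2 of tilde-B_n. *)
Definition shift1 (i : 'I_m.+2) : 'I_m.+3 := lift ord0 i.

Lemma shift1_inj : injective shift1.
Proof. exact: lift_inj. Qed.

Lemma shift1_eq0 i : (shift1 i == ord0) = false.
Proof. by apply/negbTE; rewrite eq_sym; exact: neq_lift. Qed.

Lemma eq0_shift1 i : (ord0 == shift1 i) = false.
Proof. by rewrite eq_sym shift1_eq0. Qed.

Lemma val_shift1 i : nat_of_ord (shift1 i) = i.+1.
Proof. exact: lift0. Qed.

Lemma eq_set_shift1 (A B : {set 'I_m.+3}) :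
  (ord0 \in A) = (ord0 \in B) -> (forall i, (shift1 i \in A) = (shift1 i \in B)) -> A = B.
Proof.
by move=> h0 hL; apply/setP => j; case: (unliftP ord0 j) => [i|] ->.
Qed.

Lemma memB1 (H : {set 'I_m.+2}) : memB H 1%N = (ord0 \in H).
Proof. exact: (memBE H ord0). Qed.

Lemma memT1 (A : {set 'I_m.+3}) : memT A 1%N = (ord0 \in A).
Proof. exact: (memTE A ord0). Qed.

Lemma memT2 (A : {set 'I_m.+3}) : memT A 2%N = (shift1 ord0 \in A).
Proof. exact: (memTE A (shift1 ord0)). Qed.

Lemma in_plusset0 (H : {set 'I_m.+2}) : (ord0 \in plusset H) = false.
Proof. by rewrite inE; apply/existsP => -[i /andP[_ /andP[_ /eqP]]]. Qed.

Lemma in_plusset_shift1 (H : {set 'I_m.+2}) i :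
  (shift1 i \in plusset H) = (i != ord0) && (i \in H).
Proof.
rewrite inE; apply/existsP/andP => [[i' /andP[hi /andP[h2 /eqP]]]|[hi0 hi]].
  rewrite /vT /vB val_shift1 => -[/val_inj e]; rewrite e.
  by split=> //; rewrite -(inj_eq val_inj) -lt0n.
exists i; rewrite hi /vT /vB val_shift1 eqxx andbT /=.
by case: i hi0 {hi} => -[].
Qed.

Lemma in_vset0 k : ((ord0 : 'I_m.+3) \in vset m.+2 k) = (k == 1)%N.
Proof. by rewrite inE eq_sym. Qed.

Lemma in_vset1_shift1 i : (shift1 i \in vset m.+2 1) = false.
Proof. by rewrite inE /vT val_shift1. Qed.

Lemma in_vset2_shift1 i : (shift1 i \in vset m.+2 2) = (i == ord0).
Proof. by rewrite inE /vT val_shift1. Qed.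

Definition plus1 (H : {set 'I_m.+2}) := plusset H :|: vset m.+2 1.
Definition plus2 (H : {set 'I_m.+2}) := plusset H :|: vset m.+2 2.

Definition inTE := (in_setU1, in_setU, in_set1, in_plusset0, in_plusset_shift1,
  in_vset0, in_vset1_shift1, in_vset2_shift1, inj_eq shift1_inj, shift1_eq0, eq0_shift1, eqxx).

Lemma plus_setU1 (H : {set 'I_m.+2}) i : i != ord0 ->
  [/\ plusset (i |: H) = shift1 i |: plusset H, plus1 (i |: H) = shift1 i |: plus1 H &
      plus2 (i |: H) = shift1 i |: plus2 H].
Proof.
move=> hi; split; apply: eq_set_shift1 => [|j]; rewrite /plus1 /plus2 !inTE ?orbF //;
  case: (eqVneq j i) => [->|hji] //=; rewrite ?hi ?orbT ?andbT //.
Qed.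

Lemma plus_setU0 (H : {set 'I_m.+2}) :
  [/\ plus1 (ord0 |: H) = ord0 |: plusset H, plus2 (ord0 |: H) = shift1 ord0 |: plusset H &
      shift1 ord0 |: plus1 H = ord0 |: plus2 H].
Proof.
split; apply: eq_set_shift1 => [|j]; rewrite /plus1 /plus2 !inTE ?orbF //;
  case: (eqVneq j ord0) => [->|hj] //=; rewrite ?orbT ?andbT ?orbF //.
Qed.

Definition lies_over (A : {set 'I_m.+3}) (H : {set 'I_m.+2}) :=
  (forall i, i != ord0 -> (shift1 i \in A) = (i \in H)) /\
  ((ord0 \in A) + (shift1 ord0 \in A) = (ord0 \in H) :> nat)%N.

Lemma lies_over_plus (H : {set 'I_m.+2}) :
  [/\ ord0 \in H -> lies_over (plus1 H) H, ord0 \in H -> lies_over (plus2 H) H &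
      ord0 \notin H -> lies_over (plusset H) H].
Proof.
split=> h; split; rewrite /plus1 /plus2 ?inTE ?(negbTE h) ?h //=;
  by move=> i hi; rewrite !inTE hi ?(negbTE hi) //= orbF.
Qed.

Lemma lies_over_setU1 A H i : lies_over A H -> i != ord0 ->
  lies_over (shift1 i |: A) (i |: H).
Proof.
move=> [h1 h2] hi; split; first by move=> j hj; rewrite !inTE h1.
by rewrite !inTE eq_sym (negbTE hi).
Qed.

End Merging.

Lemma runlen_shift (P Q : pred nat) f v :
  (forall w, (v <= w)%N -> Q w.+1 = P w) -> runlen Q f v.+1 = runlen P f v.
Proof.
elim: f v => [//|f IH] v h /=; rewrite h // IH // => w hw; apply: h; exact: ltnW.
Qed.

Lemma runlen_fuel (P : pred nat) f e v :
  P (v + f)%N = false -> runlen P (f + e) v = runlen P f v.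
Proof.
elim: f v => [|f IH] v /=; first by rewrite addn0 => h; case: e => //= e; rewrite h.
by move=> h; rewrite IH // addSnnS.
Qed.

(* [WB G] and [WTproper G] are convertible to these at [memB G] and [memT G]. *)
Definition WB_of_pred n (P : pred nat) : K :=
  \prod_(1 <= v < n.+1 | P v && ((v == 1)%N || ~~ P v.-1))
     (let k := runlen P n v in
      if (v + k == n.+1)%N then PB k else PA k).

Definition WT_of_pred n (Q : pred nat) : K :=
  let a := (Q 1 + Q 2)%N in
  let first :=
    if Q 3 then
      let k := runlen Q n.+1 3 in
      if (3 + k == n.+2)%N then PB (k + a)
      else if a == 0%N then PA k
      else if a == 1%N then PA k.+1
      else PD k.+2
    else (1 + qK) ^+ a in
  first *
  \prod_(4 <= v < n.+2 | Q v && ~~ Q v.-1)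
     (let k := runlen Q n.+1 v in
      if (v + k == n.+2)%N then PB k else PA k).

Lemma PA1 : PA 1 = 1 + qK.
Proof.
rewrite /PA big_nat_recr //= big_nat1 /qint big_ord1 big_ord_recr /= big_ord1.
by rewrite !expr0 expr1 mul1r.
Qed.

Section MergedWeights.

Variables (m : nat) (P Q : pred nat).
Hypothesis P_bound : forall v, (m.+2 < v)%N -> P v = false.
Hypothesis Q_shift : forall v, (2 <= v)%N -> Q v.+1 = P v.

Lemma prod_runs_shift :
  \prod_(4 <= v < m.+4 | Q v && ~~ Q v.-1)
     (if (v + runlen Q m.+3 v == m.+4)%N then PB (runlen Q m.+3 v) else PA (runlen Q m.+3 v)) =
  \prod_(3 <= v < m.+3 | P v && ((v == 1)%N || ~~ P v.-1))
     (if (v + runlen P m.+2 v == m.+3)%N then PB (runlen P m.+2 v) else PA (runlen P m.+2 v)).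
Proof.
rewrite (big_add1 _ _ 3) big_nat_cond [RHS]big_nat_cond.
apply: eq_big => [v|v /andP[/andP[hv1 _] _]].
  case hv: (3 <= v < m.+3)%N => //=; case/andP: hv => hv1 _.
  rewrite !Q_shift ?(leq_trans _ hv1) //.
  case: v hv1 => // v hv1.
  by rewrite Q_shift // [v.+1.-1]/=; case: v hv1.
rewrite (runlen_shift _ _ (P := P)); last first.
  by move=> w hw; apply: Q_shift; exact: leq_trans (ltnW hv1) hw.
rewrite (_ : runlen P m.+3 v = runlen P m.+2 v); last first.
  by rewrite -(addn1 m.+2) runlen_fuel // P_bound //; lia.
by rewrite addSn eqSS.
Qed.

Hypothesis Q12 : (Q 1 + Q 2 = P 1 :> nat)%N.

Lemma WT_of_pred_merge : WT_of_pred m.+2 Q = WB_of_pred m.+2 P.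
Proof.
rewrite /WT_of_pred /WB_of_pred; cbv zeta; rewrite Q12 prod_runs_shift.
rewrite (@big_ltn_cond _ _ _ 1 m.+3) // (@big_ltn_cond _ _ _ 2 m.+3) //.
set rB := \prod_(3 <= i < _ | _) _.
have hk1 : runlen Q m.+3 3 = runlen P m.+1 2.
  rewrite (runlen_shift _ _ (P := P)); last by move=> w hw; apply: Q_shift.
  by rewrite -(addn2 m.+1) runlen_fuel // P_bound.
have hk2 : runlen P m.+2 2 = runlen P m.+1 2 by rewrite -addn1 runlen_fuel // P_bound.
have hk3 : runlen P m.+2 1 = if P 1 then (runlen P m.+1 2).+1 else 0%N by [].
have hk0 : P 2 = false -> runlen P m.+1 2 = 0%N by move=> h; rewrite /= h.
rewrite Q_shift // hk1 hk2 hk3.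
case h1: (P 1); case h2: (P 2); rewrite ?(hk0 h2);
  set k := runlen P m.+1 2; clearbody k rB;
  rewrite /= ?addn1 ?addn0 ?expr1 ?expr0 ?mul1r ?PA1 ?addSn ?add0n ?eqSS //.
Qed.

End MergedWeights.

Lemma memT_lies_over m A (H : {set 'I_m.+2}) v : lies_over A H -> (2 <= v)%N ->
  memT A v.+1 = memB H v.
Proof.
move=> [h1 _] hv; apply/existsP/existsP => [[j /andP[hj /eqP e]]|[i /andP[hi /eqP e]]].
  case: (unliftP ord0 j) hj e => [i ->|->]; rewrite /vT => hj [e]; last by rewrite -e in hv.
  have {}e : (i : nat).+1 = v by rewrite -e; exact: (esym (lift0 i)).
  have hi0 : i != ord0 by apply/eqP => hi0; rewrite hi0 in e; rewrite -e in hv.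
  by exists i; rewrite -h1 // hj /vB e eqxx.
have hi0 : i != ord0 by apply/eqP => hi0; rewrite hi0 /vB in e; rewrite -e in hv.
by exists (shift1 i); rewrite h1 // hi /vT val_shift1 -e /vB eqxx.
Qed.

Lemma WT_lies_over m A (H : {set 'I_m.+2}) : lies_over A H -> WT A = WB H.
Proof.
move=> hc; have [_ h2] := hc.
rewrite /WT; case: eqP => [hA|_].
  by move: h2; rewrite hA !inE; case: (ord0 \in H).
apply: WT_of_pred_merge.
- move=> v hv; apply/existsP => -[i /andP[_ /eqP e]].
  move: (ltn_ord i); rewrite /vB in e; lia.
- by move=> v hv; apply: memT_lies_over.
- by rewrite memT1 memT2 memB1.
Qed.

Lemma alpha_sum n (G : {set 'I_n}) s :
  alpha G s = (\sum_(x < n) ((x \in G) && (x < s)))%N.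
Proof.
rewrite /alpha -sum1_card big_mkcond /=; apply: eq_bigr => x _; rewrite inE.
by case: (_ && _).
Qed.

Lemma alpha_ord0 n (G : {set 'I_n.+1}) : alpha G ord0 = 0%N.
Proof. by rewrite alpha_sum big1 // => x _; rewrite ltn0 andbF. Qed.

Lemma alpha_shift10 m (A : {set 'I_m.+3}) : alpha A (shift1 ord0) = (ord0 \in A).
Proof.
rewrite alpha_sum big_ord_recl big1 ?addn0; first by rewrite val_shift1 andbT.
by move=> j _; rewrite val_shift1 lift0 ltnS ltn0 andbF.
Qed.

Lemma alpha_lies_over m A (H : {set 'I_m.+2}) i : lies_over A H -> i != ord0 ->
  alpha A (shift1 i) = alpha H i.
Proof.
move=> [h1 h2] hi; have hi' : (0 < i)%N by rewrite lt0n.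
rewrite !alpha_sum big_ord_recl.
rewrite (eq_bigr (fun j : 'I_m.+2 => nat_of_bool ((shift1 j \in A) && (j < i))%N)); last first.
  by move=> j _; rewrite /shift1 !lift0 ltnS.
rewrite (bigD1 ord0) // [in RHS](bigD1 ord0) //=.
rewrite (_ : (0 < bump 0 i)%N = true) // hi' !andbT addnA h2; congr (_ + _)%N.
by apply: eq_bigr => j hj; rewrite h1.
Qed.

Section Collapse.

Variable m : nat.
Implicit Types (D G : {set 'I_m.+3}) (H : {set 'I_m.+2}).

Definition collapse D : {set 'I_m.+2} :=
  [set i | if i == ord0 then (ord0 \in D) || (shift1 ord0 \in D) else shift1 i \in D].

Definition has12 D := (ord0 \in D) && (shift1 ord0 \in D).

Lemma in_collapse0 D : (ord0 \in collapse D) = (ord0 \in D) || (shift1 ord0 \in D).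
Proof. by rewrite inE eqxx. Qed.

Lemma in_collapse D i : i != ord0 -> (i \in collapse D) = (shift1 i \in D).
Proof. by move=> hi; rewrite inE (negbTE hi). Qed.

Lemma collapse_plus H :
  [/\ ord0 \in H -> collapse (plus1 H) = H, ord0 \in H -> collapse (plus2 H) = H &
      ord0 \notin H -> collapse (plusset H) = H].
Proof.
split=> h; apply/setP => i; case: (eqVneq i ord0) => [->|hi];
  rewrite ?in_collapse0 ?in_collapse // /plus1 /plus2 ?inTE ?hi ?(negbTE h) ?h //=;
  by rewrite ?(negbTE hi) ?orbF.
Qed.

Lemma plus_collapse D : ~~ has12 D ->
  D = if ord0 \in D then plus1 (collapse D)
      else if shift1 ord0 \in D then plus2 (collapse D) else plusset (collapse D).
Proof.
rewrite /has12 => hb.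
case h0: (ord0 \in D); case h1: (shift1 ord0 \in D); rewrite ?h0 ?h1 in hb => //;
  apply: eq_set_shift1 => [|i]; rewrite /plus1 /plus2 !inTE ?h0 ?h1 //=;
  case: (eqVneq i ord0) => [->|hi]; rewrite ?in_collapse0 ?in_collapse ?h0 ?h1 ?orbF //=.
Qed.

Lemma beta_basis_ifE H :
  beta_basis H = if ord0 \in H then (fun D => ebasis (plus1 H) D + ebasis (plus2 H) D)
                 else ebasis (plusset H).
Proof. by rewrite /beta_basis memB1. Qed.

Lemma plus_not_has12 H :
  [/\ ~~ has12 (plus1 H), ~~ has12 (plus2 H) & ~~ has12 (plusset H)].
Proof. by rewrite /has12 /plus1 /plus2 !inTE. Qed.

Lemma beta_basisE H D : beta_basis H D = if has12 D then 0 else (H == collapse D)%:R.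
Proof.
have -> : beta_basis H D = if ord0 \in H then (D == plus1 H)%:R + (D == plus2 H)%:R
    else (D == plusset H)%:R by rewrite beta_basis_ifE; case: ifP.
case: (boolP (has12 D)) => [hD | nD].
  have neq (A : {set 'I_m.+3}) : ~~ has12 A -> (D == A) = false.
    by move=> hA; apply: (contraNF _ hA) => /eqP <-.
  have [n1 n2 n0] := plus_not_has12 H.
  by case: ifP => _; rewrite !neq ?addr0.
have hD := plus_collapse nD; have [c1 c2 c0] := collapse_plus H.
case: (eqVneq H (collapse D)) => [eH | ne]; last first.
  have neq (A : {set 'I_m.+3}) : collapse A = H -> (D == A) = false.
    by move=> hA; apply: (contra_neqF _ ne) => /eqP ->.
  by case: ifP => h; rewrite ?(neq _ (c1 h)) ?(neq _ (c2 h)) ?addr0 // neq ?c0 ?h.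
have neq (A : {set 'I_m.+3}) : (ord0 \in D) != (ord0 \in A) -> (D == A) = false.
  by apply: contraNF => /eqP ->; rewrite eqxx.
subst H; move: nD hD; rewrite in_collapse0 /has12 /plus1 /plus2.
case h0: (ord0 \in D); case h1: (shift1 ord0 \in D) => //= _ hD; rewrite -hD eqxx.
- by rewrite neq ?addr0 // hD !inTE.
- by rewrite neq ?add0r // hD !inTE.
- by [].
Qed.

Lemma betaE (x : cochain m.+2) D : beta x D = if has12 D then 0 else x (collapse D).
Proof.
rewrite /beta /linext; under eq_bigr => H _ do rewrite beta_basisE.
case: ifP => _; first by rewrite big1 // => H _; rewrite mulr0.
exact: sum_delta_mulr.
Qed.

Lemma in_swapset0 G : (ord0 \in swapset G) = (shift1 ord0 \in G).
Proof. by rewrite inE -memT2. Qed.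

Lemma in_swapset10 G : (shift1 ord0 \in swapset G) = (ord0 \in G).
Proof. by rewrite inE /vT val_shift1 -memT1. Qed.

Lemma in_swapset G i : i != ord0 -> (shift1 i \in swapset G) = (shift1 i \in G).
Proof.
move=> hi; rewrite inE -memTE /vT val_shift1 /swap12 /=.
by case: i hi => -[].
Qed.

Lemma swapsetK : involutive (@swapset m.+2).
Proof.
move=> G; apply: eq_set_shift1 => [|i]; first by rewrite in_swapset0 in_swapset10.
case: (eqVneq i ord0) => [->|hi]; first by rewrite in_swapset10 in_swapset0.
by rewrite !in_swapset.
Qed.

Lemma collapse_swapset D : collapse (swapset D) = collapse D.
Proof.
apply/setP => i; case: (eqVneq i ord0) => [->|hi].
  by rewrite !in_collapse0 in_swapset0 in_swapset10 orbC.
by rewrite !in_collapse // in_swapset.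
Qed.

Definition one12 D := (ord0 \in D) != (shift1 ord0 \in D).

Definition sigma_set D := if one12 D then swapset D else D.

Lemma has12_sigma_set D : has12 (sigma_set D) = has12 D.
Proof.
rewrite /sigma_set; case: ifP => // _.
by unfold has12; rewrite in_swapset0 in_swapset10 andbC.
Qed.

Lemma sigma_setK : involutive sigma_set.
Proof.
move=> D; rewrite /sigma_set; case h: (one12 D); rewrite ?h //.
by rewrite /one12 in_swapset0 in_swapset10 eq_sym -/(one12 D) h swapsetK.
Qed.

Lemma sigma_basis_set G D :
  sigma_basis G D = (if has12 G then -1 else 1) * (D == sigma_set G)%:R.
Proof.
rewrite /sigma_basis /sigma_set /one12 /has12 memT1 memT2 /ebasis.
by case: (ord0 \in G); case: (shift1 ord0 \in G); rewrite /= ?mul1r ?mulN1r.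
Qed.

Lemma sigma_basisE G D :
  sigma_basis G D = (if has12 D then -1 else 1) * (G == sigma_set D)%:R.
Proof.
rewrite sigma_basis_set eq_sym (can2_eq sigma_setK sigma_setK).
by case: eqP => [->|_]; rewrite ?has12_sigma_set ?mulr0.
Qed.

Lemma sigmaE (y : cochain m.+3) D :
  sigma y D = (if has12 D then -1 else 1) * y (sigma_set D).
Proof.
rewrite /sigma /linext; under eq_bigr => G _ do rewrite sigma_basisE mulrCA.
by rewrite -big_distrr /= sum_delta_mulr.
Qed.

Lemma collapse_sigma_set D : collapse (sigma_set D) = collapse D.
Proof. by rewrite /sigma_set; case: ifP => _ //; rewrite collapse_swapset. Qed.

Definition uncollapse H := if ord0 \in H then plus1 H else plusset H.

Lemma uncollapseK H : ~~ has12 (uncollapse H) /\ collapse (uncollapse H) = H.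
Proof.
have [p1 _ p0] := collapse_plus H; have [n1 _ n0] := plus_not_has12 H.
by rewrite /uncollapse; case: ifPn => h; [split; [|exact: p1] | split; [|exact: p0]].
Qed.

Lemma swapset_plus2 H : swapset (plus2 H) = plus1 H.
Proof.
apply: eq_set_shift1 => [|i]; first by rewrite in_swapset0 /plus1 /plus2 !inTE.
case: (eqVneq i ord0) => [->|hi]; first by rewrite in_swapset10 /plus1 /plus2 !inTE.
by rewrite in_swapset // /plus1 /plus2 !inTE (negbTE hi) !orbF.
Qed.

Lemma uncollapse_collapse D : ~~ has12 D ->
  uncollapse (collapse D) = if shift1 ord0 \in D then sigma_set D else D.
Proof.
move=> nD; have hD := plus_collapse nD; move: nD hD.
rewrite /uncollapse /sigma_set /one12 /has12 in_collapse0.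
case h0: (ord0 \in D); case h1: (shift1 ord0 \in D) => //= _ hD.
by rewrite [in RHS]hD swapset_plus2.
Qed.

End Collapse.

Section CochainMap.

Variable m : nat.
Implicit Types (A D : {set 'I_m.+3}) (H : {set 'I_m.+2}).

Lemma sum_notin_shift1 (F : 'I_m.+3 -> K) A :
  \sum_(u | u \notin A) F u =
  (if ord0 \notin A then F ord0 else 0) + (if shift1 ord0 \notin A then F (shift1 ord0) else 0)
  + \sum_(i : 'I_m.+2 | i != ord0) (if shift1 i \notin A then F (shift1 i) else 0).
Proof. by rewrite big_mkcond big_ord_recl (bigD1 ord0) //= addrA. Qed.

Lemma sum_notin_ord0 (F : 'I_m.+2 -> K) H :
  \sum_(u | u \notin H) F u =
  (if ord0 \notin H then F ord0 else 0)
  + \sum_(i : 'I_m.+2 | i != ord0) (if i \notin H then F i else 0).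
Proof. by rewrite big_mkcond (bigD1 ord0). Qed.

Lemma beta_dbasis_in0 H D : ord0 \in H ->
  linext (@beta_basis m.+2) (dbasis (@WB m.+2) H) D =
  linext (dbasis (@WT m.+2)) (beta_basis H) D.
Proof.
move=> h0; rewrite linext_dbasis beta_basis_ifE h0 linext_ebasisD /dbasis.
have [/(_ h0) e1 /(_ h0) e2 _] := lies_over_plus H.
have [in1 in2 in3 in4] : [/\ ord0 \in plus1 H, shift1 ord0 \notin plus1 H,
    ord0 \notin plus2 H & shift1 ord0 \in plus2 H] by rewrite /plus1 /plus2 !inTE.
rewrite !sum_notin_shift1 sum_notin_ord0 h0 in1 in2 in3 in4 /=.
rewrite !add0r addr0 addrACA -big_split /=.
(* both faces are H^+ u {1,2}, with opposite signs and W (plus1 H) = W (plus2 H) *)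
rewrite [X in _ = X + _](_ : _ = 0) ?add0r; last first.
  have [_ _ <-] := plus_setU0 H.
  rewrite alpha_shift10 in1 alpha_ord0 (WT_lies_over e1) (WT_lies_over e2) expr1 expr0.
  by rewrite mulN1r mul1r mulrN addNr.
apply: eq_bigr => i hi; have [s1 _] := e1; have [s2 _] := e2.
rewrite (s1 i hi) (s2 i hi); case: ifPn => hiH; last by rewrite addr0.
have [_ f1 f2] := plus_setU1 H hi.
rewrite beta_basis_ifE in_setU1 h0 orbT /ebasis f1 f2 /=.
rewrite (alpha_lies_over e1 hi) (alpha_lies_over e2 hi).
rewrite (WT_lies_over (lies_over_setU1 e1 hi)) (WT_lies_over (lies_over_setU1 e2 hi)).
rewrite (WT_lies_over e1) (WT_lies_over e2).
ring.
Qed.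

Lemma beta_dbasis_notin0 H D : ord0 \notin H ->
  linext (@beta_basis m.+2) (dbasis (@WB m.+2) H) D =
  linext (dbasis (@WT m.+2)) (beta_basis H) D.
Proof.
move=> h0; rewrite linext_dbasis beta_basis_ifE (negbTE h0) linext_ebasis /dbasis.
have [_ _ /(_ h0) e0] := lies_over_plus H.
have [l1 l2 _] := lies_over_plus (ord0 |: H).
have [in1 in2] : ord0 \notin plusset H /\ shift1 ord0 \notin plusset H by rewrite !inTE.
rewrite sum_notin_shift1 sum_notin_ord0 h0 in1 in2 /=; congr (_ + _).
  have [<- <- _] := plus_setU0 H.
  rewrite beta_basis_ifE setU11 /ebasis /= !alpha_ord0 alpha_shift10 (negbTE in1) expr0.
  rewrite (WT_lies_over (l1 (setU11 _ _))) (WT_lies_over (l2 (setU11 _ _))).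
  rewrite (WT_lies_over e0).
  ring.
apply: eq_bigr => i hi; have [s0 _] := e0.
rewrite (s0 i hi); case: ifPn => // hiH.
have [f0 _ _] := plus_setU1 H hi.
have hn : ord0 \in i |: H = false.
  by rewrite in_setU1 (negbTE h0) orbF eq_sym (negbTE hi).
rewrite beta_basis_ifE hn /ebasis f0 /=.
rewrite (alpha_lies_over e0 hi) (WT_lies_over (lies_over_setU1 e0 hi)) (WT_lies_over e0).
ring.
Qed.

Lemma beta_dbasis H D :
  linext (@beta_basis m.+2) (dbasis (@WB m.+2) H) D =
  linext (dbasis (@WT m.+2)) (beta_basis H) D.
Proof. by case: (boolP (ord0 \in H)) => [/beta_dbasis_in0 | /beta_dbasis_notin0]. Qed.

End CochainMap.

Lemma isLaurent0 : isLaurent 0.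
Proof. by exists 0%N, 0%N, 0; rewrite !mul0r /toK tofrac0. Qed.

Lemma natr2_neq0 : (2%:R : K) != 0.
Proof.
have -> : (2%:R : K) = toK 2%:R by rewrite /toK rmorph_nat.
by rewrite /toK tofrac_eq0 -!polyC_natr !polyC_eq0 pnatr_eq0.
Qed.

Section Isomorphism.

Variable m : nat.
Implicit Types (x : cochain m.+2) (y : cochain m.+3) (D : {set 'I_m.+3}) (G : {set 'I_m.+2}).

Lemma beta_dB x D : beta (dB x) D = dT (beta x) D.
Proof.
by rewrite /beta /dB /dT /dcoch !linext_linext; apply: eq_bigr => H _; rewrite beta_dbasis.
Qed.

Lemma beta_laurent x : laurentC x -> laurentC (beta x).
Proof. by move=> hx D; rewrite betaE; case: ifP => _ //; exact: isLaurent0. Qed.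

Lemma sigma_beta x D : sigma (beta x) D = beta x D.
Proof.
rewrite sigmaE !betaE has12_sigma_set collapse_sigma_set.
by case: ifP => _; rewrite ?mulr0 ?mul1r.
Qed.

Lemma beta_inj x1 x2 : (forall D, beta x1 D = beta x2 D) -> forall G, x1 G = x2 G.
Proof.
move=> e G; have [hb hc] := uncollapseK G.
by move: (e (uncollapse G)); rewrite !betaE (negbTE hb) hc.
Qed.

Lemma sigma_invariant_has12 y D : (forall D, sigma y D = y D) -> has12 D -> y D = 0.
Proof.
move=> hy hD; have := hy D; rewrite sigmaE hD /sigma_set /one12.
move: hD => /andP[-> ->] /=; rewrite mulN1r => /esym/eqP.
by rewrite -addr_eq0 -mulr2n -mulr_natl mulf_eq0 (negbTE natr2_neq0) => /eqP.
Qed.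

Lemma sigma_invariant_sigma_set y D : (forall D, sigma y D = y D) -> ~~ has12 D ->
  y (sigma_set D) = y D.
Proof. by move=> hy hD; rewrite -hy sigmaE has12_sigma_set (negbTE hD) sigma_setK mul1r. Qed.

Lemma beta_onto y : (forall D, sigma y D = y D) ->
  forall D, beta (fun G => y (uncollapse G)) D = y D.
Proof.
move=> hy D; rewrite betaE; case: ifPn => hD; first by rewrite (sigma_invariant_has12 hy hD).
by rewrite uncollapse_collapse //; case: ifP => _ //; rewrite sigma_invariant_sigma_set.
Qed.

End Isomorphism.

Theorem mainTheorem4 (n : nat) (hn : (2 <= n)%N) :
  (forall x : cochain n, laurentC x ->
     forall D, beta (dB x) D = dT (beta x) D) /\
  (forall x : cochain n, laurentC x ->
     laurentC (beta x) /\ forall D, sigma (beta x) D = beta x D) /\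
  (forall x y : cochain n, laurentC x -> laurentC y ->
     (forall D, beta x D = beta y D) -> forall G, x G = y G) /\
  (forall y : cochain n.+1, laurentC y -> (forall D, sigma y D = y D) ->
     exists x : cochain n, laurentC x /\ forall D, beta x D = y D).
Proof.
case: n hn => [|[|m]] // _.
split; [|split; [|split]].
- by move=> x _ D; apply: beta_dB.
- by move=> x hx; split; [exact: beta_laurent | exact: sigma_beta].
- by move=> x y _ _; apply: beta_inj.
- move=> y hy hs; exists (fun G => y (uncollapse G)); split; last exact: beta_onto.
  by move=> G; apply: hy.
Qed.
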